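(* Let $(K_n)_{n\in\omega}$ be an enumeration of the finitely presented groups (one representative of each isomorphism class), and let $G=\prod_{n\in\omega}K_n$ be their restricted direct product (the subgroup of the full direct product consisting of the elements with only finitely many nontrivial coordinates). Let $L$ be a two-generated simple group such that every homomorphism $L\to G$ is trivial, and let $H=L\times G$. Then $R_G L = L$ and $R_H L = 1$. In particular, $G$ and $H$ are not geometrically equivalent, while $G$ and $H$ satisfy the same quasiidentities.
   Context: For groups $G$ and $X$, the $G$-radical of $X$ is $R_G X=\bigcap\{\ker\varphi : \varphi: X\to G \text{ a homomorphism}\}$. For a normal subgroup $U$ of $X$, the $G$-closure $\overline{U}^G$ of $U$ in $X$ is the normal subgroup of $X$ containing $U$ with $\overline{U}^G/U = R_G(X/U)$; equivalently $\overline{U}^G=\bigcap\{\ker\varphi:\varphi:X\to G,\ U\subseteq\ker\varphi\}$. Two groups $G$ and $H$ are geometrically equivalent if for every free group $F$ of finite rank and every normal subgroup $U$ of $F$, the $G$-closure and the $H$-closure of $U$ in $F$ coincide. A quasiidentity is a formula $(w_1=1\wedge\dots\wedge w_n=1)\rightarrow w=1$ where $w_1,\dots,w_n,w$ are words in a free group of finite rank; a group satisfies it if it holds under every assignment of group elements to the variables. Two groups satisfy the same quasiidentities if every quasiidentity satisfied by one is satisfied by the other. *)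

From Stdlib Require Import List ProofIrrelevance FunctionalExtensionality.
From mathcomp Require Import all_boot.
Set Implicit Arguments. Unset Strict Implicit. Unset Printing Implicit Defensive.

Record group := Group {
  gcarrier :> Type;
  gmul : gcarrier -> gcarrier -> gcarrier;
  ginv : gcarrier -> gcarrier;
  gone : gcarrier;
  gmulA : forall x y z, gmul x (gmul y z) = gmul (gmul x y) z;
  gmul1 : forall x, gmul gone x = x;
  gmulV : forall x, gmul (ginv x) x = gone }.
Arguments gmul {g}. Arguments ginv {g}. Arguments gone {g}.

Definition hom (X Y : group) (f : X -> Y) : Prop :=
  forall x y, f (gmul x y) = gmul (f x) (f y).

Definition iso (X Y : group) : Prop :=
  exists f : X -> Y, hom f /\ bijective f.

Definition normal (X : group) (N : X -> Prop) : Prop :=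
  N gone /\ (forall x y, N x -> N y -> N (gmul x y)) /\ (forall x, N x -> N (ginv x))
  /\ (forall x g, N x -> N (gmul (gmul (ginv g) x) g)).

Definition simple (X : group) : Prop :=
  (exists x : X, x <> gone) /\
  forall N : X -> Prop, normal N -> (forall x, N x -> x = gone) \/ (forall x, N x).

Definition radical (G X : group) (x : X) : Prop :=
  forall f : X -> G, hom f -> f x = gone.

Inductive term (V : Type) : Type :=
| Var : V -> term V
| One : term V
| Mul : term V -> term V -> term V
| Inv : term V -> term V.
Arguments One {V}.

Fixpoint eval (X : group) V (a : V -> X) (t : term V) : X :=
  match t with
  | Var v => a v
  | One => gone
  | Mul t1 t2 => gmul (eval a t1) (eval a t2)
  | Inv t1 => ginv (eval a t1)
  end.

(** Equality in the free group: the congruence generated by the group axioms. *)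
Inductive feq V : term V -> term V -> Prop :=
| feq_refl t : feq t t
| feq_sym t u : feq t u -> feq u t
| feq_trans t u v : feq t u -> feq u v -> feq t v
| feq_mul t t' u u' : feq t t' -> feq u u' -> feq (Mul t u) (Mul t' u')
| feq_inv t t' : feq t t' -> feq (Inv t) (Inv t')
| feq_assoc t u v : feq (Mul t (Mul u v)) (Mul (Mul t u) v)
| feq_one t : feq (Mul One t) t
| feq_invl t : feq (Mul (Inv t) t) One.

Definition free_normal n (U : term 'I_n -> Prop) : Prop :=
  (forall t u, feq t u -> U t -> U u) /\ U One /\
  (forall t u, U t -> U u -> U (Mul t u)) /\ (forall t, U t -> U (Inv t)) /\
  (forall t g, U t -> U (Mul (Mul (Inv g) t) g)).

(** G-closure of U in F_n: intersection of the kernels of homs F_n -> G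
    containing U; a hom F_n -> G is given by an assignment 'I_n -> G. *)
Definition gclosure (G : group) n (U : term 'I_n -> Prop) (w : term 'I_n) : Prop :=
  forall a : 'I_n -> G, (forall u, U u -> eval a u = gone) -> eval a w = gone.

Definition geom_equiv (G H : group) : Prop :=
  forall n (U : term 'I_n -> Prop), free_normal U ->
    forall w, gclosure G U w <-> gclosure H U w.

Definition qi_sat (G : group) n (ws : list (term 'I_n)) (w : term 'I_n) : Prop :=
  forall a : 'I_n -> G, (forall u, List.In u ws -> eval a u = gone) -> eval a w = gone.

Definition same_qi (G H : group) : Prop :=
  forall n (ws : list (term 'I_n)) (w : term 'I_n), qi_sat G ws w <-> qi_sat H ws w.

Inductive nclosure n (rels : list (term 'I_n)) : term 'I_n -> Prop :=
| nc_rel r : List.In r rels -> nclosure rels r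
| nc_one : nclosure rels One
| nc_mul t u : nclosure rels t -> nclosure rels u -> nclosure rels (Mul t u)
| nc_inv t : nclosure rels t -> nclosure rels (Inv t)
| nc_conj t g : nclosure rels t -> nclosure rels (Mul (Mul (Inv g) t) g)
| nc_feq t u : feq t u -> nclosure rels t -> nclosure rels u.

Definition fin_presented (X : group) : Prop :=
  exists n (g : 'I_n -> X) (rels : list (term 'I_n)),
    (forall x, exists w, eval g w = x) /\
    (forall w, eval g w = gone <-> nclosure rels w).

Definition two_generated (X : group) : Prop :=
  exists a b : X, forall x : X, exists w : term 'I_2,
    eval (fun i : 'I_2 => if nat_of_ord i == 0 then a else b) w = x.

Lemma sig_ext (A : Type) (P : A -> Prop) (x y : {a | P a}) :
  proj1_sig x = proj1_sig y -> x = y.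
Proof.
destruct x as [x px], y as [y py]; simpl; intros ->.
f_equal; apply proof_irrelevance.
Qed.

Lemma gmulK (X : group) (x y : X) : gmul (ginv x) (gmul x y) = y.
Proof. by rewrite gmulA gmulV gmul1. Qed.

Lemma ginv_one (X : group) : ginv (gone : X) = gone.
Proof.
have mulgV (x : X) : gmul x (ginv x) = gone.
  rewrite -[gmul x (ginv x)]gmul1 -(gmulV (ginv x)) -gmulA.
  by rewrite [gmul (ginv x) (gmul x (ginv x))]gmulK.
by rewrite -[ginv gone]gmul1 mulgV.
Qed.

Section RProd.
Variable K : nat -> group.

Definition rprod_carrier :=
  {f : forall n, K n | exists N, forall m, (N <= m)%N -> f m = gone}.

Lemma rprod_mul_fin (f g : rprod_carrier) :
  exists N, forall m, (N <= m)%N ->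
    (fun n => gmul (proj1_sig f n) (proj1_sig g n)) m = gone.
Proof.
destruct f as [f [N1 H1]], g as [g [N2 H2]]; exists (maxn N1 N2) => m Hm /=.
rewrite H1 ?H2 ?gmul1 //; apply: leq_trans Hm; by rewrite ?leq_maxl ?leq_maxr.
Qed.

Lemma rprod_inv_fin (f : rprod_carrier) :
  exists N, forall m, (N <= m)%N -> (fun n => ginv (proj1_sig f n)) m = gone.
Proof.
destruct f as [f [N1 H1]]; exists N1 => m Hm /=.
by rewrite H1 // ginv_one.
Qed.

Lemma rprod_one_fin :
  exists N, forall m, (N <= m)%N -> (fun n => (gone : K n)) m = gone.
Proof. by exists 0%N. Qed.

Definition rprod_mul (f g : rprod_carrier) : rprod_carrier :=
  exist _ _ (rprod_mul_fin f g).
Definition rprod_inv (f : rprod_carrier) : rprod_carrier :=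
  exist _ _ (rprod_inv_fin f).
Definition rprod_one : rprod_carrier := exist _ _ rprod_one_fin.

Lemma rprod_mulA x y z : rprod_mul x (rprod_mul y z) = rprod_mul (rprod_mul x y) z.
Proof. apply: sig_ext; apply: functional_extensionality_dep => n /=; exact: gmulA. Qed.
Lemma rprod_mul1 x : rprod_mul rprod_one x = x.
Proof. apply: sig_ext; apply: functional_extensionality_dep => n /=; exact: gmul1. Qed.
Lemma rprod_mulV x : rprod_mul (rprod_inv x) x = rprod_one.
Proof. apply: sig_ext; apply: functional_extensionality_dep => n /=; exact: gmulV. Qed.

Definition rprod : group := Group rprod_mulA rprod_mul1 rprod_mulV.
End RProd.

Section DProd.
Variables X Y : group.
Definition dprod_mul (p q : X * Y) : X * Y := (gmul p.1 q.1, gmul p.2 q.2).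
Definition dprod_inv (p : X * Y) : X * Y := (ginv p.1, ginv p.2).
Definition dprod_one : X * Y := (gone, gone).
Lemma dprod_mulA p q r : dprod_mul p (dprod_mul q r) = dprod_mul (dprod_mul p q) r.
Proof. by rewrite /dprod_mul /= !gmulA. Qed.
Lemma dprod_mul1 p : dprod_mul dprod_one p = p.
Proof. by case: p => a b; rewrite /dprod_mul /= !gmul1. Qed.
Lemma dprod_mulV p : dprod_mul (dprod_inv p) p = dprod_one.
Proof. by rewrite /dprod_mul /= !gmulV. Qed.
Definition dprod : group := Group dprod_mulA dprod_mul1 dprod_mulV.
End DProd.

(* Every homomorphism from L to G is trivial, so R_G L = L, while L embeds in
   H = L x G, so R_H L = 1.  Presenting L as F_2 / U, the G-closure of U is
   therefore all of F_2 whereas its H-closure is U itself, and G, H are not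
   geometrically equivalent.  For quasiidentities: G embeds in H, so H's
   quasiidentities hold in G; conversely, a quasiidentity (w_1 = .. = w_k = 1)
   -> w = 1 valid in G holds in the group <x | w_1, .., w_k>, which embeds in
   G as one of the factors K_n, so w lies in the normal closure of the w_i and
   the quasiidentity holds in every group. *)
From Pilot Require Import Defs.
From Stdlib Require Import FunctionalExtensionality PropExtensionality.
From Stdlib Require Import ClassicalEpsilon.
From mathcomp Require Import all_boot.
Set Implicit Arguments. Unset Strict Implicit. Unset Printing Implicit Defensive.

Section GroupLemmas.
Variable X : group.
Implicit Types x y : X.

Lemma gmulgV x : gmul x (ginv x) = gone.
Proof.
rewrite -[gmul x (ginv x)]gmul1 -(gmulV (ginv x)) -gmulA.
by rewrite [gmul (ginv x) (gmul x (ginv x))]gmulK.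
Qed.

Lemma gmulg1 x : gmul x gone = x.
Proof. by rewrite -(gmulV x) gmulA gmulgV gmul1. Qed.

Lemma gmulgK x y : gmul (gmul y x) (ginv x) = y.
Proof. by rewrite -gmulA gmulgV gmulg1. Qed.

Lemma gmulgKV x y : gmul (gmul y (ginv x)) x = y.
Proof. by rewrite -gmulA gmulV gmulg1. Qed.

Lemma ginv_eq x y : gmul x y = gone -> ginv x = y.
Proof. by move=> xy1; rewrite -[ginv x]gmulg1 -xy1 gmulK. Qed.

Lemma ginvK x : ginv (ginv x) = x.
Proof. by apply: ginv_eq; rewrite gmulV. Qed.

Lemma ginvM x y : ginv (gmul x y) = gmul (ginv y) (ginv x).
Proof.
by apply: ginv_eq; rewrite -gmulA [gmul y _]gmulA gmulgV gmul1 gmulgV.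
Qed.

Lemma gmul_eq1 x y : gmul x (ginv y) = gone -> x = y.
Proof. by move=> xy1; rewrite -(gmulgKV y x) xy1 gmul1. Qed.

End GroupLemmas.

Ltac gsimp_step := rewrite ?ginv_one ?ginvM ?ginvK ?gmulA ?gmulgK ?gmulgKV
  ?gmulgV ?gmulV ?gmul1 ?gmulg1.
Ltac gsimp := gsimp_step; try gsimp_step.

Section Homomorphisms.
Variables (X Y : group) (f : X -> Y).
Hypothesis f_hom : hom f.

Lemma hom_one : f gone = gone.
Proof.
have := f_hom gone gone; rewrite gmul1 => f1.
by rewrite -(gmulgK (f gone) (f gone)) -f1 gmulgV.
Qed.

Lemma hom_inv x : f (ginv x) = ginv (f x).
Proof. by symmetry; apply: ginv_eq; rewrite -f_hom gmulgV hom_one. Qed.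

Lemma hom_eval V (a : V -> X) t : f (eval a t) = eval (fun v => f (a v)) t.
Proof.
elim: t => //= [|t1 IH1 t2 IH2|t IH]; first exact: hom_one.
- by rewrite f_hom IH1 IH2.
- by rewrite hom_inv IH.
Qed.

End Homomorphisms.

Lemma feq_eval (X : group) V (a : V -> X) t u : feq t u -> eval a t = eval a u.
Proof.
elim=> {t u} [// | t u _ -> // | t u v _ -> _ -> // | t t' u u' _ /= -> _ -> //
  | t t' _ /= -> // | t u v | t | t] /=; by rewrite ?gmulA ?gmul1 ?gmulV.
Qed.

Definition embeds (X Y : group) : Prop :=
  exists f : X -> Y, hom f /\ injective f.

Record term_congruence V (E : term V -> term V -> Prop) : Prop := TermCongruence {
  congr_refl : forall t, E t t;
  congr_sym : forall t u, E t u -> E u t;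
  congr_trans : forall t u v, E t u -> E u v -> E t v;
  congr_mul : forall t t' u u', E t t' -> E u u' -> E (Mul t u) (Mul t' u');
  congr_inv : forall t t', E t t' -> E (Inv t) (Inv t');
  congr_assoc : forall t u v, E (Mul t (Mul u v)) (Mul (Mul t u) v);
  congr_one : forall t, E (Mul One t) t;
  congr_invl : forall t, E (Mul (Inv t) t) One }.

(* The quotient of the term algebra by a congruence: a class is represented by
   the predicate [E t], and the operations act on representatives chosen by
   [constructive_indefinite_description]. *)
Section TermQuotient.
Variables (V : Type) (E : term V -> term V -> Prop).
Hypothesis E_congr : term_congruence E.

Definition qclass := {P : term V -> Prop | exists t, P = E t}.

Definition qcl (t : term V) : qclass := exist _ (E t) (ex_intro _ t erefl).

Definition qrep (q : qclass) : term V :=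
  proj1_sig (constructive_indefinite_description _ (proj2_sig q)).

Lemma qcl_eq t u : qcl t = qcl u <-> E t u.
Proof.
split=> [/(f_equal (@proj1_sig _ _)) /= -> | Etu].
  exact: (congr_refl E_congr).
apply: sig_ext; apply: functional_extensionality => v /=.
apply: propositional_extensionality; split=> Ev.
- exact: (congr_trans E_congr (congr_sym E_congr Etu) Ev).
- exact: (congr_trans E_congr Etu Ev).
Qed.

Lemma qrepK q : qcl (qrep q) = q.
Proof.
apply: sig_ext; rewrite /qrep /=.
by case: (constructive_indefinite_description _ _) => t /= ->.
Qed.

Lemma qcl_ind (P : qclass -> Prop) : (forall t, P (qcl t)) -> forall q, P q.
Proof. by move=> Pcl q; rewrite -(qrepK q). Qed.

Definition qmul p q := qcl (Mul (qrep p) (qrep q)).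
Definition qinv p := qcl (Inv (qrep p)).
Definition qone := qcl One.

Lemma qrep_cl t : E (qrep (qcl t)) t.
Proof. by apply/qcl_eq; rewrite qrepK. Qed.

Lemma qmulE t u : qmul (qcl t) (qcl u) = qcl (Mul t u).
Proof. by apply/qcl_eq; apply: (congr_mul E_congr); apply: qrep_cl. Qed.

Lemma qinvE t : qinv (qcl t) = qcl (Inv t).
Proof. by apply/qcl_eq; apply: (congr_inv E_congr); apply: qrep_cl. Qed.

Lemma qmulA x y z : qmul x (qmul y z) = qmul (qmul x y) z.
Proof.
elim/qcl_ind: x => x; elim/qcl_ind: y => y; elim/qcl_ind: z => z.
by rewrite !qmulE; apply/qcl_eq; apply: (congr_assoc E_congr).
Qed.

Lemma qmul1 x : qmul qone x = x.
Proof.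
elim/qcl_ind: x => x; rewrite qmulE.
by apply/qcl_eq; apply: (congr_one E_congr).
Qed.

Lemma qmulV x : qmul (qinv x) x = qone.
Proof.
elim/qcl_ind: x => x; rewrite qinvE qmulE.
by apply/qcl_eq; apply: (congr_invl E_congr).
Qed.

Definition quotient_group : group :=
  @Defs.Group qclass qmul qinv qone qmulA qmul1 qmulV.

Lemma eval_qcl t : @eval quotient_group V (fun v => qcl (Var v)) t = qcl t.
Proof.
elim: t => //= [t1 -> t2 -> | t ->]; [exact: qmulE | exact: qinvE].
Qed.

End TermQuotient.

Lemma feq_congruence V : term_congruence (@feq V).
Proof. by split; [constructor | econstructor; eauto ..]. Qed.

(* The term model of [feq] is the free group. *)
Lemma feq_of_eval V (t u : term V) :
  (forall (X : group) (a : V -> X), eval a t = eval a u) -> feq t u.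
Proof.
pose F := feq_congruence V.
move=> tu; apply/(qcl_eq F); rewrite -!(eval_qcl F).
exact: (tu (quotient_group F)).
Qed.

Section Presentations.
Variables (n : nat) (rels : list (term 'I_n)).

Definition presented_rel (t u : term 'I_n) := nclosure rels (Mul t (Inv u)).

Lemma nclosure_feq t u :
  (forall (X : group) (a : 'I_n -> X), eval a t = eval a u) ->
  nclosure rels t -> nclosure rels u.
Proof. by move=> tu; apply: nc_feq; apply: feq_of_eval. Qed.

Lemma presented_rel_congruence : term_congruence presented_rel.
Proof.
have rel_of_feq t u : feq t u -> presented_rel t u.
  move=> tu; apply: nclosure_feq (nc_one _) => X a /=.
  by rewrite (feq_eval a tu); gsimp.
split; rewrite /presented_rel.
- by move=> t; apply: rel_of_feq; apply: feq_refl.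
- by move=> t u /nc_inv; apply: nclosure_feq => X a /=; gsimp.
- by move=> t u v tu uv; apply: nclosure_feq (nc_mul tu uv) => X a /=; gsimp.
- move=> t t' u u' tt' uu'.
  by apply: nclosure_feq (nc_mul (nc_conj (Inv t) uu') tt') => X a /=; gsimp.
- by move=> t u /nc_inv /(nc_conj t); apply: nclosure_feq => X a /=; gsimp.
- by move=> *; apply: rel_of_feq; apply: feq_assoc.
- by move=> *; apply: rel_of_feq; apply: feq_one.
- by move=> *; apply: rel_of_feq; apply: feq_invl.
Qed.

Definition presented := quotient_group presented_rel_congruence.

Lemma eval_presented_eq1 w :
  @eval presented _ (fun i => qcl presented_rel (Var i)) w = gone <->
  nclosure rels w.
Proof.
rewrite eval_qcl (qcl_eq presented_rel_congruence) /presented_rel.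
by split; apply: nclosure_feq => X a /=; gsimp.
Qed.

Lemma presented_fin_presented : fin_presented presented.
Proof.
exists n, (fun i => qcl presented_rel (Var i)), rels; split; last first.
  exact: eval_presented_eq1.
by move=> x; exists (qrep x); rewrite eval_qcl qrepK.
Qed.

Lemma qi_sat_nclosure (X : group) w : nclosure rels w -> qi_sat X rels w.
Proof.
move=> relsw a rels1; elim: relsw => {w} //=
  [t u _ -> _ -> | t _ -> | t g _ -> | t u tu _ <-]; try by gsimp.
exact: esym (feq_eval a tu).
Qed.

Lemma nclosure_qi_sat_presented w : qi_sat presented rels w -> nclosure rels w.
Proof.
move=> Pw; apply/eval_presented_eq1; apply: Pw => u relsu.
exact/eval_presented_eq1/nc_rel.
Qed.

End Presentations.

Lemma qi_sat_embeds (X Y : group) n (ws : list (term 'I_n)) w :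
  embeds X Y -> qi_sat Y ws w -> qi_sat X ws w.
Proof.
move=> [f [f_hom f_inj]] Yw a ws1; apply: f_inj.
rewrite (hom_one f_hom) (hom_eval f_hom); apply: Yw => u wsu.
by rewrite -(hom_eval f_hom) ws1 // (hom_one f_hom).
Qed.

Lemma qi_sat_universal (G : group) :
  (forall X, fin_presented X -> embeds X G) ->
  forall n (ws : list (term 'I_n)) w, qi_sat G ws w -> forall X, qi_sat X ws w.
Proof.
move=> fpG n ws w Gw X; apply/qi_sat_nclosure/nclosure_qi_sat_presented.
exact: qi_sat_embeds (fpG _ (presented_fin_presented ws)) Gw.
Qed.

Lemma same_qi_of_embeds (G H : group) :
  (forall X, fin_presented X -> embeds X G) -> embeds G H -> same_qi G H.
Proof.
move=> fpG GH n ws w; split; last exact: qi_sat_embeds.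
by move=> Gw; apply: (qi_sat_universal (X := H) fpG Gw).
Qed.

Section CoordinateEmbedding.
Variables (K : nat -> group) (m : nat).

Definition rprod_coord (x : K m) (k : nat) : K k :=
  match m =P k with
  | ReflectT e => eq_rect m K x k e
  | ReflectF _ => gone
  end.

Lemma rprod_coord_fin x :
  exists N, forall k, (N <= k)%N -> rprod_coord x k = gone.
Proof.
exists m.+1 => k; rewrite /rprod_coord; case: (m =P k) => // e.
by subst k; rewrite ltnn.
Qed.

Definition rprod_in (x : K m) : rprod K := exist _ _ (rprod_coord_fin x).

Lemma rprod_in_hom : hom rprod_in.
Proof.
move=> x y; apply: sig_ext; apply: functional_extensionality_dep => k /=.
rewrite /rprod_coord; case: (m =P k) => [e | _]; first by subst k.
by rewrite gmul1.
Qed.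

Lemma rprod_in_inj : injective rprod_in.
Proof.
move=> x y /(f_equal (fun f => proj1_sig f m)) /=.
by rewrite /rprod_coord; case: (m =P m) => // e; rewrite (eq_axiomK e).
Qed.

End CoordinateEmbedding.

Lemma embeds_rprod (K : nat -> group) (X : group) :
  (exists n, iso X (K n)) -> embeds X (rprod K).
Proof.
move=> [m [f [f_hom /bij_inj f_inj]]]; exists (fun x => rprod_in (f x)); split.
- by move=> x y; rewrite f_hom rprod_in_hom.
- by move=> x y /rprod_in_inj /f_inj.
Qed.

Lemma embeds_dprodl (X Y : group) : embeds X (dprod X Y).
Proof.
exists (fun x => (x, gone)); split; last by move=> x y [].
by move=> x y; rewrite /= /dprod_mul /= gmul1.
Qed.

Lemma embeds_dprodr (X Y : group) : embeds Y (dprod X Y).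
Proof.
exists (fun y => (gone, y)); split; last by move=> x y [].
by move=> x y; rewrite /= /dprod_mul /= gmul1.
Qed.

Lemma radical_embeds_eq1 (H X : group) (x : X) :
  embeds X H -> radical H x -> x = gone.
Proof. by move=> [f [f_hom f_inj]] Hx; apply: f_inj; rewrite Hx ?hom_one. Qed.

Definition ker_eval (X : group) V (a : V -> X) (w : term V) : Prop :=
  eval a w = gone.

Lemma ker_eval_free_normal (X : group) n (a : 'I_n -> X) :
  free_normal (ker_eval a).
Proof.
rewrite /ker_eval; split; first by move=> t u /(feq_eval a) <-.
split=> //=; split; first by move=> t u -> ->; gsimp.
by split=> [t -> | t g ->]; gsimp.
Qed.

Lemma eval_factor (X Y : group) V (a : V -> X) (c : V -> Y) :
  (forall x, exists w, eval a w = x) ->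
  (forall u, ker_eval a u -> ker_eval c u) ->
  exists f : X -> Y, hom f /\ forall w, f (eval a w) = eval c w.
Proof.
move=> a_gen ker_ac.
have eval_c t u : eval a t = eval a u -> eval c t = eval c u.
  move=> tu; apply: gmul_eq1; apply: (ker_ac (Mul t (Inv u))).
  by rewrite /ker_eval /= tu gmulgV.
pose rep x := proj1_sig (constructive_indefinite_description _ (a_gen x)).
have repP x : eval a (rep x) = x.
  by rewrite /rep; case: (constructive_indefinite_description _ _).
exists (fun x => eval c (rep x)); split=> [x y | w].
  rewrite -[RHS]/(eval c (Mul (rep x) (rep y))).
  by apply: eval_c; rewrite /= !repP.
by apply: eval_c; rewrite repP.
Qed.

Lemma gclosure_ker_eval_radical (G X : group) n (a : 'I_n -> X) w :
  (forall x, exists w, eval a w = x) -> radical G (eval a w) ->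
  gclosure G (ker_eval a) w.
Proof.
move=> a_gen Gw c ker_ac; have [f [f_hom fE]] := eval_factor a_gen ker_ac.
by rewrite -fE Gw.
Qed.

Lemma gclosure_ker_eval_embeds (H X : group) n (a : 'I_n -> X) w :
  embeds X H -> gclosure H (ker_eval a) w -> eval a w = gone.
Proof.
move=> [f [f_hom f_inj]] Hw; apply: f_inj; rewrite hom_one // hom_eval //.
by apply: Hw => u au1; rewrite -hom_eval // au1 hom_one.
Qed.

(* The kernel U of a presentation of X has G-closure F_n but H-closure U. *)
Lemma not_geom_equiv (G H X : group) n (a : 'I_n -> X) :
  (forall x, exists w, eval a w = x) -> (exists x : X, x <> gone) ->
  (forall x : X, radical G x) -> embeds X H -> ~ geom_equiv G H.
Proof.
move=> a_gen [x x_nontriv] RG XH GH_equiv; have [w xE] := a_gen x.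
apply: x_nontriv; rewrite -xE.
have [GH _] := GH_equiv n _ (ker_eval_free_normal a) w.
exact/(gclosure_ker_eval_embeds XH)/GH/gclosure_ker_eval_radical/RG.
Qed.

Theorem theorem2 (K : nat -> group)
  (HKfp : forall n, fin_presented (K n))
  (HKall : forall X : group, fin_presented X -> exists n, iso X (K n))
  (HKuniq : forall m n, iso (K m) (K n) -> m = n)
  (L : group) (HL2 : two_generated L) (HLs : simple L)
  (HLtriv : forall f : L -> rprod K, hom f -> forall x, f x = gone) :
  let G := rprod K in
  let H := dprod L G in
  (forall x : L, radical G x) /\
  (forall x : L, radical H x -> x = gone) /\
  ~ geom_equiv G H /\
  same_qi G H.
Proof.
move=> G H.
have RG : forall x : L, radical G x by move=> x f f_hom; apply: HLtriv.
have LH : embeds L H := embeds_dprodl L G.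
split; first exact: RG.
split; first by move=> x; apply: radical_embeds_eq1.
split.
- have [a [b ab_gen]] := HL2; have [L_nontriv _] := HLs.
  exact: not_geom_equiv ab_gen L_nontriv RG LH.
- apply: same_qi_of_embeds; last exact: embeds_dprodr.
  by move=> X /HKall; apply: embeds_rprod.
Qed.
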